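(* Let $F_n$, $n=1,2,\dots$, and $F$ be metric preserving functions on $[0,+\infty)^2$. If $F$ is continuous and $F_n\to F$ pointwise, then $F_n\to F$ uniformly on every compact subset of $[0,+\infty)^2$.
   Context: A function $F\colon[0,+\infty)^2\to[0,+\infty)$ is metric preserving if for any metric spaces $(X,d_X),(Y,d_Y)$ the function $((x,y),(x',y'))\mapsto F(d_X(x,x'),d_Y(y,y'))$ is a metric on $X\times Y$. *)

From Stdlib Require Import Reals List.
Open Scope R_scope.

Definition is_metric (X : Type) (d : X -> X -> R) : Prop :=
  (forall x y, 0 <= d x y) /\
  (forall x y, d x y = 0 <-> x = y) /\
  (forall x y, d x y = d y x) /\
  (forall x y z, d x z <= d x y + d y z).

(* F : [0,+oo)^2 -> [0,+oo) is metric preserving: for all metric spaces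
   (X,dX), (Y,dY), ((x,y),(x',y')) |-> F (dX x x') (dY y y') is a metric on X*Y.
   F is represented as a function R -> R -> R; only its values on [0,+oo)^2
   matter. *)
Definition metric_preserving (F : R -> R -> R) : Prop :=
  (forall a b, 0 <= a -> 0 <= b -> 0 <= F a b) /\
  (forall (X Y : Type) (dX : X -> X -> R) (dY : Y -> Y -> R),
      is_metric X dX -> is_metric Y dY ->
      is_metric (X * Y)%type
        (fun p q => F (dX (fst p) (fst q)) (dY (snd p) (snd q)))).

Definition quadrant (a b : R) : Prop := 0 <= a /\ 0 <= b.

Definition continuous_on_quadrant (F : R -> R -> R) : Prop :=
  forall a b, quadrant a b ->
    forall eps, 0 < eps -> exists delta, 0 < delta /\
      forall a' b', quadrant a' b' ->
        sqrt ((a' - a)^2 + (b' - b)^2) < delta -> Rabs (F a' b' - F a b) < eps.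

Definition open2 (U : R -> R -> Prop) : Prop :=
  forall a b, U a b -> exists r, 0 < r /\
    forall a' b', sqrt ((a' - a)^2 + (b' - b)^2) < r -> U a' b'.

Definition compact2 (K : R -> R -> Prop) : Prop :=
  forall (I : Type) (U : I -> R -> R -> Prop),
    (forall i, open2 (U i)) ->
    (forall a b, K a b -> exists i, U i a b) ->
    exists l : list I, forall a b, K a b -> exists i, In i l /\ U i a b.

Definition pointwise_cv (Fs : nat -> R -> R -> R) (F : R -> R -> R) : Prop :=
  forall a b, quadrant a b -> Un_cv (fun n => Fs n a b) (F a b).

Definition uniform_cv_on (K : R -> R -> Prop) (Fs : nat -> R -> R -> R)
  (F : R -> R -> R) : Prop :=
  forall eps, 0 < eps -> exists N : nat, forall n, (n >= N)%nat ->
    forall a b, K a b -> Rabs (Fs n a b - F a b) < eps.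

(* A metric preserving G is controlled by its own values near the origin: the
   triangle inequality for G on (R,|.|) x (R,|.|) through the points (0,0),
   (y1,y2), (x1,x2) gives |G x - G y| <= G(|x1 - y1|, |x2 - y2|), and the
   triangle inequality for the truncated metric min(|.|, d) gives G h k <= 2 G d d
   for h, k <= d.  Since F is continuous with F(0,0) = 0, F(d,d) is small for
   small d, and F_n(d,d) -> F(d,d); hence the F_n are eventually uniformly
   equicontinuous on the quadrant.  Together with the continuity of F and
   pointwise convergence, a finite cover of the compact set by small boxes then
   yields uniform convergence. *)
From Stdlib Require Import Reals List Lra Lia.
Open Scope R_scope.

Lemma Rabs_metric : is_metric R (fun x y => Rabs (x - y)).
Proof.
  split; [|split; [|split]].
  - intros; apply Rabs_pos.
  - intros x y; split.
    + unfold Rabs; destruct (Rcase_abs _); intros; lra.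
    + intros ->; rewrite Rminus_diag; apply Rabs_R0.
  - intros; apply Rabs_minus_sym.
  - intros x y z; unfold Rabs; repeat destruct (Rcase_abs _); lra.
Qed.

Lemma is_metric_Rmin (X : Type) (d : X -> X -> R) (c : R) :
  0 < c -> is_metric X d -> is_metric X (fun x y => Rmin (d x y) c).
Proof.
  intros Hc [Hpos [Hzero [Hsym Htri]]].
  split; [|split; [|split]].
  - intros x y; apply Rmin_glb; [apply Hpos | lra].
  - intros x y; split.
    + intros H0; apply Hzero.
      destruct (Rle_dec (d x y) c) as [Hle | Hgt].
      * now rewrite Rmin_left in H0.
      * rewrite Rmin_right in H0; lra.
    + intros Hxy; apply Hzero in Hxy; rewrite Hxy; apply Rmin_left; lra.
  - intros x y; now rewrite Hsym.
  - intros x y z; specialize (Htri x y z); pose proof (Hpos x y); pose proof (Hpos y z).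
    unfold Rmin; repeat destruct (Rle_dec _ _); lra.
Qed.

Lemma metric_preserving_triangle (G : R -> R -> R) (d : R -> R -> R) :
  metric_preserving G -> is_metric R d ->
  forall x1 x2 y1 y2 z1 z2,
    G (d x1 z1) (d x2 z2) <= G (d x1 y1) (d x2 y2) + G (d y1 z1) (d y2 z2).
Proof.
  intros [_ HG] Hd x1 x2 y1 y2 z1 z2.
  destruct (HG R R d d Hd Hd) as [_ [_ [_ Htri]]].
  exact (Htri (x1, x2) (y1, y2) (z1, z2)).
Qed.

Lemma metric_preserving_0 (G : R -> R -> R) : metric_preserving G -> G 0 0 = 0.
Proof.
  intros [_ HG].
  destruct (HG R R _ _ Rabs_metric Rabs_metric) as [_ [Hzero _]].
  specialize (Hzero (0, 0) (0, 0)); simpl in Hzero.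
  rewrite Rminus_diag, Rabs_R0 in Hzero.
  now apply Hzero.
Qed.

Lemma Rabs_0_sub (x : R) : 0 <= x -> Rabs (0 - x) = x.
Proof. intros Hx; rewrite Rabs_minus_sym, Rminus_0_r; now apply Rabs_pos_eq. Qed.

Lemma metric_preserving_Rabs_sub (G : R -> R -> R) : metric_preserving G ->
  forall x1 x2 y1 y2, 0 <= x1 -> 0 <= x2 -> 0 <= y1 -> 0 <= y2 ->
  Rabs (G x1 x2 - G y1 y2) <= G (Rabs (x1 - y1)) (Rabs (x2 - y2)).
Proof.
  intros HG x1 x2 y1 y2 Hx1 Hx2 Hy1 Hy2.
  pose proof (metric_preserving_triangle G _ HG Rabs_metric 0 0 y1 y2 x1 x2) as Hxy.
  pose proof (metric_preserving_triangle G _ HG Rabs_metric 0 0 x1 x2 y1 y2) as Hyx.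
  cbv beta in Hxy, Hyx; rewrite !Rabs_0_sub in Hxy, Hyx by assumption.
  rewrite (Rabs_minus_sym y1), (Rabs_minus_sym y2) in Hxy.
  apply Rabs_le; lra.
Qed.

Lemma metric_preserving_le_twice (G : R -> R -> R) : metric_preserving G ->
  forall d h k, 0 < d -> 0 <= h <= d -> 0 <= k <= d -> G h k <= 2 * G d d.
Proof.
  intros HG d h k Hd Hh Hk.
  pose proof (metric_preserving_triangle G _ HG
    (is_metric_Rmin R _ d Hd Rabs_metric) 0 0 (h + d) (k + d) h k) as Htri.
  cbv beta in Htri.
  replace (h + d - h) with d in Htri by ring.
  replace (k + d - k) with d in Htri by ring.
  rewrite !Rabs_0_sub, (Rabs_pos_eq d) in Htri by lra.
  rewrite (Rmin_left h), (Rmin_left k), (Rmin_right (h + d)), (Rmin_right (k + d)),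
    Rmin_left in Htri by lra.
  lra.
Qed.

Lemma Rabs_le_dist (u v : R) : Rabs u <= sqrt (u ^ 2 + v ^ 2).
Proof.
  rewrite <- sqrt_Rsqr_abs, Rsqr_pow2; apply sqrt_le_1_alt; nra.
Qed.

Lemma dist_lt_of_Rabs_lt (u v r : R) : 0 < r -> Rabs u < r / 2 -> Rabs v < r / 2 ->
  sqrt (u ^ 2 + v ^ 2) < r.
Proof.
  intros Hr Hu Hv.
  rewrite <- (sqrt_pow2 r) by lra.
  apply sqrt_lt_1_alt; split; [nra|].
  rewrite <- (pow2_abs u), <- (pow2_abs v).
  pose proof (Rabs_pos u); pose proof (Rabs_pos v); nra.
Qed.

Lemma open2_box (p1 p2 r : R) :
  open2 (fun a b => Rabs (a - p1) < r /\ Rabs (b - p2) < r).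
Proof.
  intros a b [Ha Hb].
  exists (Rmin (r - Rabs (a - p1)) (r - Rabs (b - p2))); split.
  - apply Rmin_glb_lt; lra.
  - intros a' b' Hdist.
    pose proof (Rabs_le_dist (a' - a) (b' - b)).
    pose proof (Rabs_le_dist (b' - b) (a' - a)) as Hb'.
    rewrite Rplus_comm in Hb'.
    pose proof (Rmin_l (r - Rabs (a - p1)) (r - Rabs (b - p2))).
    pose proof (Rmin_r (r - Rabs (a - p1)) (r - Rabs (b - p2))).
    pose proof (Rabs_triang (a' - a) (a - p1)).
    pose proof (Rabs_triang (b' - b) (b - p2)).
    replace (a' - a + (a - p1)) with (a' - p1) in * by ring.
    replace (b' - b + (b - p2)) with (b' - p2) in * by ring.
    split; lra.
Qed.

Lemma continuous_on_quadrant_box (F : R -> R -> R) : continuous_on_quadrant F ->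
  forall a b, quadrant a b -> forall e, 0 < e -> exists r, 0 < r /\
    forall a' b', quadrant a' b' -> Rabs (a' - a) < r -> Rabs (b' - b) < r ->
      Rabs (F a' b' - F a b) < e.
Proof.
  intros Hc a b Hab e He.
  destruct (Hc a b Hab e He) as [delta [Hdelta Hcont]].
  exists (delta / 2); split; [lra|].
  intros a' b' Hq Ha Hb; apply Hcont; [exact Hq|].
  now apply dist_lt_of_Rabs_lt.
Qed.

Lemma list_max_bound (I : Type) (f : I -> nat) (l : list I) (i : I) :
  In i l -> (f i <= list_max (map f l))%nat.
Proof.
  intros Hi.
  assert (Hall := proj1 (list_max_le (map f l) _) (le_n _)).
  rewrite Forall_forall in Hall; exact (Hall _ (in_map f l i Hi)).
Qed.

Lemma compact2_box_cover_bound (K : R -> R -> Prop) (P : R -> R -> R -> nat -> Prop) :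
  compact2 K ->
  (forall a b, K a b -> exists r N, 0 < r /\ P a b r N) ->
  exists N, forall a b, K a b -> exists p1 p2 r M,
    P p1 p2 r M /\ (M <= N)%nat /\ Rabs (a - p1) < r /\ Rabs (b - p2) < r.
Proof.
  intros HK Hloc.
  set (I := {t : R * R * R * nat | let '(p1, p2, r, M) := t in P p1 p2 r M}).
  set (U := fun (i : I) a b => let '(p1, p2, r, _) := proj1_sig i in
                                Rabs (a - p1) < r /\ Rabs (b - p2) < r).
  set (index := fun i : I => let '(_, _, _, M) := proj1_sig i in M).
  destruct (HK I U) as [l Hl].
  - intros [[[[p1 p2] r] M] HP]; apply open2_box.
  - intros a b Hab.
    destruct (Hloc a b Hab) as [r [M [Hr HP]]].
    exists (exist _ (a, b, r, M) HP); unfold U; simpl.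
    rewrite !Rminus_diag, Rabs_R0; now split.
  - exists (list_max (map index l)).
    intros a b Hab.
    destruct (Hl a b Hab) as [i [Hil HUi]].
    pose proof (list_max_bound I index l i Hil) as Hbound.
    destruct i as [[[[p1 p2] r] M] HP]; unfold U in HUi; unfold index in Hbound; simpl in HUi, Hbound.
    exists p1, p2, r, M; tauto.
Qed.

Lemma metric_preserving_eventually_equicontinuous
  (Fs : nat -> R -> R -> R) (F : R -> R -> R) :
  (forall n, metric_preserving (Fs n)) -> metric_preserving F ->
  continuous_on_quadrant F -> pointwise_cv Fs F ->
  forall e, 0 < e -> exists d N, 0 < d /\
    forall n, (n >= N)%nat -> forall a b a' b', quadrant a b -> quadrant a' b' ->
      Rabs (a - a') <= d -> Rabs (b - b') <= d -> Rabs (Fs n a b - Fs n a' b') < e.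
Proof.
  intros HFs HF Hc Hpw e He.
  assert (Hq0 : quadrant 0 0) by (split; lra).
  destruct (continuous_on_quadrant_box F Hc 0 0 Hq0 (e / 4)) as [r [Hr Hcont]]; [lra|].
  set (d := r / 2).
  assert (Hqd : quadrant d d) by (unfold d; split; lra).
  assert (HFd : F d d < e / 4).
  { specialize (Hcont d d Hqd).
    rewrite (metric_preserving_0 F HF), Rminus_0_r, Rminus_0_r, Rabs_pos_eq in Hcont
      by (unfold d; lra).
    apply Rabs_def2 in Hcont; [lra|unfold d; lra|unfold d; lra]. }
  destruct (Hpw d d Hqd (e / 4)) as [N HN]; [lra|].
  exists d, N; split; [unfold d; lra|].
  intros n Hn a b a' b' [Ha Hb] [Ha' Hb'] Hda Hdb.
  specialize (HN n Hn); unfold R_dist in HN; apply Rabs_def2 in HN.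
  eapply Rle_lt_trans; [now apply metric_preserving_Rabs_sub|].
  eapply Rle_lt_trans.
  - apply (metric_preserving_le_twice _ (HFs n) d); [unfold d; lra| |];
      split; auto using Rabs_pos.
  - lra.
Qed.

Theorem mainTheorem16 (Fs : nat -> R -> R -> R) (F : R -> R -> R) :
  (forall n, metric_preserving (Fs n)) ->
  metric_preserving F ->
  continuous_on_quadrant F ->
  pointwise_cv Fs F ->
  forall K : R -> R -> Prop,
    (forall a b, K a b -> quadrant a b) ->
    compact2 K ->
    uniform_cv_on K Fs F.
Proof.
  intros HFs HF Hc Hpw K HKq HK eps Heps.
  set (e := eps / 3).
  destruct (metric_preserving_eventually_equicontinuous Fs F HFs HF Hc Hpw e)
    as [d [N0 [Hd Hequi]]]; [unfold e; lra|].
  destruct (compact2_box_cover_bound K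
    (fun p1 p2 r M => quadrant p1 p2 /\ r <= d /\
       (forall a b, quadrant a b -> Rabs (a - p1) < r -> Rabs (b - p2) < r ->
          Rabs (F a b - F p1 p2) < e) /\
       (forall n, (n >= M)%nat -> Rabs (Fs n p1 p2 - F p1 p2) < e)) HK)
    as [N HN].
  { intros a b Hab.
    destruct (continuous_on_quadrant_box F Hc a b (HKq a b Hab) e) as [r [Hr Hcont]];
      [unfold e; lra|].
    destruct (Hpw a b (HKq a b Hab) e) as [M HM]; [unfold e; lra|].
    exists (Rmin r d), M; split; [now apply Rmin_glb_lt|].
    split; [exact (HKq a b Hab)|]; split; [apply Rmin_r|]; split.
    - intros a' b' Hq Ha' Hb'; pose proof (Rmin_l r d); apply Hcont; auto; lra.
    - intros n Hn; exact (HM n Hn). }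
  exists (Nat.max N0 N); intros n Hn a b Hab.
  destruct (HN a b Hab) as [p1 [p2 [r [M [[Hp [Hrd [Hcont Hcv]]] [HMN [Ha Hb]]]]]]].
  assert (Hfn := Hequi n ltac:(lia) a b p1 p2 (HKq a b Hab) Hp ltac:(lra) ltac:(lra)).
  assert (Hfnp := Hcv n ltac:(lia)).
  assert (Hfp := Hcont a b (HKq a b Hab) Ha Hb).
  apply Rabs_def2 in Hfn, Hfnp, Hfp; apply Rabs_def1; unfold e in *; lra.
Qed.
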